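(* For all positive integers $r,k$, let $p$ be the smallest prime with $2k^2r^2<p$ and let $n=rp$. Then there exists a binary $(r,k)$-batch code of dimension $n$ and rate $\frac{r}{r+k}$; its redundancy equals $kp$.
   Context: A binary linear code of length $N$ encoding $n$ information bits $x_1,\dots,x_n$ is an $(r,k)$-batch code if for every multiset $\{i_1,\dots,i_k\}$ of indices there exist $k$ mutually disjoint sets $R_1,\dots,R_k$ of coordinates, each of size at most $r$, such that $x_{i_j}$ is a function of the codeword bits indexed by $R_j$. Its rate is $n/N$ and its redundancy is $N-n$. *)

From HB Require Import structures.
From mathcomp Require Import all_boot all_order all_algebra.
Set Implicit Arguments. Unset Strict Implicit. Unset Printing Implicit Defensive.
Import GRing.Theory.
Local Open Scope ring_scope.

(* A binary linear code of length N encoding n information bits is given by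
   its generator matrix G : 'M['F_2]_(n, N); the message x : 'rV_n is encoded
   as the codeword x *m G. *)

Definition restrict_cw (n N : nat) (G : 'M['F_2]_(n, N)) (R : {set 'I_N})
  (x : 'rV['F_2]_n) : 'I_N -> 'F_2 :=
  fun c => if c \in R then (x *m G) 0 c else 0.

Definition recoverable (n N : nat) (G : 'M['F_2]_(n, N)) (i : 'I_n)
  (R : {set 'I_N}) : Prop :=
  exists f : ('I_N -> 'F_2) -> 'F_2,
    forall x : 'rV['F_2]_n, f (restrict_cw G R x) = x 0 i.

(* (r,k)-batch code: for every multiset {i_1,...,i_k} (a family 'I_k -> 'I_n,
   repetitions allowed) there are k mutually disjoint recovery sets of size
   at most r. *)
Definition batch_code (r k n N : nat) (G : 'M['F_2]_(n, N)) : Prop :=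
  forall idx : 'I_k -> 'I_n,
    exists R : 'I_k -> {set 'I_N},
      (forall j j' : 'I_k, j != j' -> [disjoint R j & R j']) /\
      (forall j : 'I_k, (#|R j| <= r)%N) /\
      (forall j : 'I_k, recoverable G (idx j) (R j)).

From HB Require Import structures.
From mathcomp Require Import all_boot all_order all_algebra zify ring.

(* The information bits are the points [(b, c)] of ['I_r * 'F_p], read as the
   affine points [(v b, c)] of the plane over ['F_p] for distinct abscissae
   [v b]; there is one parity bit per line [y = l x + g] of slope [l < k], the
   sum of the at most [r] points on it.  A bit is recovered from the parity bit
   of any line through it and the other points of that line.
   Two lines through a point meet only there.  If moreover the [v b] avoid the
   "triangles" [v b1 (l1 - l2) + v b2 (l2 - l3) + v b3 (l3 - l1) = 0], which a
   greedy choice achieves as soon as [p > 2 k^2 r^2], then from a point off a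
   line [L] at most one slope leads to a line meeting [L].  Hence every request
   forbids at most one slope to each other request, and the [k] requests can be
   given, one after the other, lines whose recovery sets are pairwise disjoint. *)

Set Implicit Arguments.
Unset Strict Implicit.
Unset Printing Implicit Defensive.

Import GRing.Theory.
Local Open Scope ring_scope.

Lemma exists_notin (T : finType) (A : {set T}) : (#|A| < #|T|)%N -> exists t, t \notin A.
Proof.
move=> ltA; have /set0Pn[t] : ~: A != set0 by rewrite -card_gt0 -(ltn_add2l #|A|) addn0 cardsC.
by rewrite inE; exists t.
Qed.

Lemma exists_notin_bigcup (I T : finType) (A : {pred I}) (B : I -> {set T}) :
  (\sum_(i in A) #|B i| < #|T|)%N -> exists t, forall i, i \in A -> t \notin B i.
Proof.
move=> lt_sum; have le_sum : (#|\bigcup_(i in A) B i| <= \sum_(i in A) #|B i|)%N.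
  elim/big_rec2: _ => [|i n U _ IH]; first by rewrite cards0.
  by rewrite (leq_trans (leq_card_setU _ _)) // leq_add2l.
have [t notin_t] := exists_notin (leq_ltn_trans le_sum lt_sum).
by exists t => i Ai; apply: contra notin_t => Bt; apply/bigcupP; exists i.
Qed.

Lemma disjointP (T : finType) (A B : {pred T}) :
  reflect (forall x, x \in A -> x \notin B) [disjoint A & B].
Proof. by rewrite disjoint_subset; apply: (iffP subsetP) => AB x /AB; rewrite inE. Qed.

Section TriangleFree.

Variables (F : finFieldType) (k : nat) (s : 'I_k -> F).

Definition triangle_form (w1 w2 w3 : F) (l1 l2 l3 : 'I_k) : F :=
  w1 * (s l1 - s l2) + w2 * (s l2 - s l3) + w3 * (s l3 - s l1).

Lemma triangle_form_rot w1 w2 w3 l1 l2 l3 :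
  triangle_form w1 w2 w3 l1 l2 l3 = triangle_form w2 w3 w1 l2 l3 l1.
Proof. by rewrite /triangle_form; ring. Qed.

Definition triangle_free m (v : 'I_m -> F) : Prop :=
  forall (b1 b2 b3 : 'I_m) (l1 l2 l3 : 'I_k),
    uniq [:: b1; b2; b3] -> uniq [:: l1; l2; l3] ->
    triangle_form (v b1) (v b2) (v b3) l1 l2 l3 != 0.

Definition slope_ratio (l1 l2 l3 : 'I_k) : F := (s l2 - s l3) / (s l1 - s l2).

Definition slope_ratios : {set F} :=
  [set slope_ratio l.1.1 l.1.2 l.2 | l : 'I_k * 'I_k * 'I_k & l.1.1 != l.1.2].

Lemma triangle_form_eq0 w u2 u3 l1 l2 l3 : s l1 != s l2 ->
  triangle_form w u2 u3 l1 l2 l3 = 0 -> w = u3 + (u3 - u2) * slope_ratio l1 l2 l3.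
Proof.
rewrite -subr_eq0 => ne_s form0; apply: (mulIf ne_s).
rewrite mulrDl -mulrA divfK //; apply/eqP; rewrite -subr_eq0 -form0; apply/eqP.
by rewrite /triangle_form; ring.
Qed.

Hypothesis s_inj : injective s.

Section Extend.

Variables (m : nat) (v : 'I_m -> F).

Definition forbidden_values : {set F} :=
  [set v b | b : 'I_m] :|:
  [set v b.2 + (v b.2 - v b.1) * a | b in [set: 'I_m * 'I_m], a in slope_ratios].

Lemma card_forbidden_values : (#|forbidden_values| <= m + m ^ 2 * #|slope_ratios|)%N.
Proof.
apply: leq_trans (leq_card_setU _ _) _; apply: leq_add.
  by rewrite (leq_trans (leq_imset_card _ _)) // cardT size_enum_ord.
rewrite curry_imset2X (leq_trans (leq_imset_card _ _)) // cardsX cardsT card_prod card_ord.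
by rewrite expnS expn1.
Qed.

Definition extend (w : F) (b : 'I_m.+1) : F :=
  if unlift ord_max b is Some b' then v b' else w.

Lemma extend_lift w b : extend w (lift ord_max b) = v b.
Proof. by rewrite /extend liftK. Qed.

Lemma extend_max w : extend w ord_max = w.
Proof. by rewrite /extend unlift_none. Qed.

Variable w : F.
Hypothesis w_allowed : w \notin forbidden_values.

Lemma extend_inj : injective v -> injective (extend w).
Proof.
have w_new b : w != v b.
  by apply: contraNneq w_allowed => ->; rewrite inE imset_f.
move=> v_inj b b'.
case: (unliftP ord_max b) => [c|] ->; case: (unliftP ord_max b') => [c'|] ->;
  rewrite ?extend_lift ?extend_max //.
- by move/v_inj->.
- by move=> eq_v; move: (w_new c); rewrite eq_v eqxx.
- by move=> eq_v; move: (w_new c'); rewrite eq_v eqxx.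
Qed.

Lemma triangle_form_extend_max (b2 b3 : 'I_m) l1 l2 l3 : uniq [:: l1; l2; l3] ->
  triangle_form w (v b2) (v b3) l1 l2 l3 != 0.
Proof.
move=> /and3P[]; rewrite !inE negb_or => /andP[ne12 _] _ _.
apply: contraNneq w_allowed => /triangle_form_eq0 ->; last by rewrite (inj_eq s_inj).
rewrite inE; apply/orP; right; apply: (imset2_f _ (in_setT (b2, b3))).
by apply/imsetP; exists (l1, l2, l3); rewrite ?inE.
Qed.

Lemma extend_triangle_free : triangle_free v -> triangle_free (extend w).
Proof.
move=> v_tf b1 b2 b3 l1 l2 l3.
have lift_uniq (c1 c2 c3 : 'I_m) :
    uniq [:: lift ord_max c1; lift ord_max c2; lift ord_max c3] = uniq [:: c1; c2; c3].
  exact: (map_inj_uniq (@lift_inj _ ord_max) [:: c1; c2; c3]).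
have rot_uniq3 (a b c : 'I_k) : uniq [:: a; b; c] -> uniq [:: b; c; a].
  by rewrite -(rot_uniq 1).
case: (unliftP ord_max b1) => [c1|] ->; case: (unliftP ord_max b2) => [c2|] ->;
  case: (unliftP ord_max b3) => [c3|] ->; rewrite ?extend_lift ?extend_max => ub ul;
  try by move: ub; rewrite /= !inE eqxx ?orbT ?andbF.
- by apply: v_tf => //; rewrite -lift_uniq.
- rewrite 2!triangle_form_rot triangle_form_extend_max //.
  exact: rot_uniq3 _ _ _ (rot_uniq3 _ _ _ ul).
- by rewrite triangle_form_rot triangle_form_extend_max // (rot_uniq3 _ _ _ ul).
- exact: triangle_form_extend_max.
Qed.

End Extend.

Lemma exists_injective_triangle_free r : (r + r ^ 2 * #|slope_ratios| <= #|F|)%N ->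
  exists v : 'I_r -> F, injective v /\ triangle_free v.
Proof.
move=> F_big; suff: forall m, (m <= r)%N -> exists v : 'I_m -> F, injective v /\ triangle_free v.
  by apply.
elim=> [|m IH] lt_mr; first by exists (fun=> 0); split=> [[]|[]].
have [v [v_inj v_tf]] := IH (ltnW lt_mr).
have [w w_allowed] : exists w, w \notin forbidden_values v.
  apply/exists_notin/(leq_ltn_trans (card_forbidden_values v))/(leq_trans _ F_big).
  by rewrite -addSn leq_add // leq_mul2r leq_exp2r // (ltnW lt_mr) orbT.
by exists (extend v w); split; [apply: extend_inj | apply: extend_triangle_free].
Qed.

End TriangleFree.

Lemma card_slope_ratios_Fp (p k : nat) : prime p -> (k < p)%N ->
  (#|slope_ratios (fun l : 'I_k => (l : nat)%:R : 'F_p)| <= k.-1 * (2 * k).-1)%N.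
Proof.
move=> p_pr lt_kp.
(* A ratio [(l2 - l3) / (l1 - l2)] of slopes [< k] is some [e / d] with
   [0 < d < k] and [-k < e < k]. *)
pose ratio (de : 'I_k.-1 * 'I_(2 * k).-1) : 'F_p :=
  ((de.2 : nat)%:R - (k.-1)%:R) / (de.1 : nat).+1%:R.
have ratio_mem (x y z : nat) : (x < k)%N -> (y < k)%N -> (0 < z < k)%N ->
    (x%:R - y%:R) / z%:R \in ratio @: setT.
  move=> lt_xk lt_yk /andP[z_gt0 lt_zk].
  apply/imsetP.
  exists (@Ordinal k.-1 z.-1 ltac:(lia), @Ordinal (2 * k).-1 (x + k.-1 - y) ltac:(lia)) => //.
  by rewrite /ratio /= prednK // natrB ?natrD; [congr (_ / _); ring | lia].
apply: (leq_trans (subset_leq_card (_ : _ \subset ratio @: setT))).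
  apply/subsetP => _ /imsetP[[[l1 l2] l3] /[!inE] /= ne12 ->]; rewrite /slope_ratio.
  have := ltn_ord l1; have := ltn_ord l2; have := ltn_ord l3.
  case: (ltngtP l1 l2) => [lt12|lt21|/val_inj eq12]; last by rewrite eq12 eqxx in ne12.
    rewrite -mulrNN -invrN !opprB -(natrB _ (ltnW lt12)) => *.
    by apply: ratio_mem => //; lia.
  by rewrite -(natrB _ (ltnW lt21)) => *; apply: ratio_mem => //; lia.
by rewrite (leq_trans (leq_imset_card _ _)) // cardsT card_prod !card_ord.
Qed.

Section IncidenceCode.

Variables (P Ln : finType) (inc : P -> Ln -> bool) (k r : nat) (line : P -> 'I_k -> Ln).

Definition meets (L L' : Ln) : bool := [exists z, inc z L && inc z L'].

Hypothesis inc_line : forall x l, inc x (line x l).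
Hypothesis line_inj : forall x, injective (line x).
Hypothesis lines_meet_only_at : forall x z l l',
  x != z -> inc z (line x l) -> inc z (line x l') -> l = l'.
Hypothesis meeting_direction_unique : forall x L l l',
  ~~ inc x L -> meets (line x l) L -> meets (line x l') L -> l = l'.
Hypothesis card_line : forall L, (#|[set z | inc z L]| <= r)%N.

Lemma meetsC L L' : meets L L' = meets L' L.
Proof. by apply/existsP/existsP=> -[z /andP[inL inL']]; exists z; rewrite inL inL'. Qed.

Definition compatible (x : P) (l : 'I_k) (y : P) (l' : 'I_k) : bool :=
  if x == y then l != l' else ~~ meets (line x l) (line y l').

Lemma compatibleC x l y l' : compatible x l y l' = compatible y l' x l.
Proof. by rewrite /compatible eq_sym meetsC; case: eqP; rewrite // eq_sym. Qed.

Section Greedy.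

Variable X : 'I_k -> P.

Definition avoids_requests (x : P) (L : Ln) : Prop := forall j, inc (X j) L -> X j = x.

Definition greedy_inv (m : nat) (d : 'I_k -> 'I_k) : Prop :=
  (forall j : 'I_k, (j < m)%N -> avoids_requests (X j) (line (X j) (d j))) /\
  (forall j j' : 'I_k, (j < m)%N -> (j' < m)%N -> j != j' ->
     compatible (X j) (d j) (X j') (d j')).

Section Step.

Variables (m : nat) (d : 'I_k -> 'I_k).
Hypotheses (lt_mk : (m < k)%N) (inv : greedy_inv m d).

Let mo := Ordinal lt_mk.
Let x := X mo.

(* A pending request at another point forbids the line through it: every line
   through that point would meet the line chosen now. *)
Definition blocked (j : 'I_k) : {set 'I_k} :=
  [set l | if (j < m)%N then ~~ compatible x l (X j) (d j)
           else (X j != x) && inc (X j) (line x l)].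

Lemma card_blocked j : j != mo -> (#|blocked j| <= 1)%N.
Proof.
move=> ne_j; apply/card_le1_eqP => l l'; rewrite !inE.
case: ifP => [lt_jm|_]; last first.
  case/andP=> ne_x inc_l /andP[_ inc_l'].
  by apply: (lines_meet_only_at _ inc_l' inc_l); rewrite eq_sym.
rewrite /compatible; case: eqP => [_|ne_x]; rewrite !negbK; first by move=> /eqP-> /eqP->.
move=> meet_l meet_l'; apply: (meeting_direction_unique _ meet_l' meet_l).
by apply/negP => /(inv.1 j lt_jm mo) eq_x; apply: ne_x.
Qed.

Lemma lt_of_neq_max (j : 'I_k) : j != mo -> (j < m.+1)%N -> (j < m)%N.
Proof. by rewrite ltnS leq_eqVlt -val_eqE /= => /negbTE->. Qed.

Lemma greedy_inv_step : exists d', greedy_inv m.+1 d'.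
Proof.
have [l free] : exists l, forall j, j \in predC1 mo -> l \notin blocked j.
  apply: exists_notin_bigcup; apply: (@leq_ltn_trans (\sum_(j in predC1 mo) 1)).
    by apply: leq_sum => j; apply: card_blocked.
  by rewrite sum1_card cardC1 card_ord ltn_predL (leq_ltn_trans _ lt_mk).
have compat_l (j : 'I_k) : (j < m)%N -> compatible x l (X j) (d j).
  move=> lt_jm; have ne_j : j != mo by apply: contraTneq lt_jm => ->; rewrite ltnn.
  by have := free j ne_j; rewrite inE lt_jm negbK.
have avoid_l : avoids_requests x (line x l).
  move=> j inc_j; apply/eqP/negP => /negP ne_x.
  have ne_j : j != mo by apply: contraNneq ne_x => ->.
  have := free j ne_j; rewrite inE; case: ifP => [lt_jm|_]; last by rewrite ne_x inc_j.
  rewrite negbK /compatible eq_sym (negbTE ne_x) => /negP; apply.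
  by apply/existsP; exists (X j); rewrite inc_j inc_line.
exists (fun j => if j == mo then l else d j); split=> [j|j j'].
  case: (eqVneq j mo) => [->|ne_j] // /(lt_of_neq_max ne_j).
  exact: inv.1.
case: (eqVneq j mo) => [->|ne_j]; case: (eqVneq j' mo) => [->|ne_j'] //.
- by move=> _ /(lt_of_neq_max ne_j') /compat_l.
- by move=> /(lt_of_neq_max ne_j) /compat_l; rewrite compatibleC.
- by move=> /(lt_of_neq_max ne_j) lt_j /(lt_of_neq_max ne_j'); apply: inv.2.
Qed.

End Step.

Lemma exists_greedy_inv m : (m <= k)%N -> exists d, greedy_inv m d.
Proof.
elim: m => [|m IH] le_mk; first by exists id.
by have [d inv] := IH (ltnW le_mk); apply: greedy_inv_step inv.
Qed.

End Greedy.

Lemma exists_compatible_directions (X : 'I_k -> P) : exists d : 'I_k -> 'I_k,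
  forall j j', j != j' -> compatible (X j) (d j) (X j') (d j').
Proof.
have [d [_ compat]] := exists_greedy_inv X (leqnn k).
by exists d => j j'; apply: compat.
Qed.

Variables (n M : nat) (card_P : #|P| = n) (card_Ln : #|Ln| = M).

Definition point_of (i : 'I_n) : P := enum_val (cast_ord (esym card_P) i).
Definition line_of (c : 'I_M) : Ln := enum_val (cast_ord (esym card_Ln) c).
Definition line_index (L : Ln) : 'I_M := cast_ord card_Ln (enum_rank L).

Lemma point_of_inj : injective point_of.
Proof. by move=> i i' /enum_val_inj /cast_ord_inj. Qed.

Lemma line_indexK : cancel line_index line_of.
Proof. by move=> L; rewrite /line_of /line_index cast_ordK enum_rankK. Qed.

Definition incidence_mx : 'M['F_2]_(n, M) := \matrix_(i, c) (inc (point_of i) (line_of c))%:R.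

Definition generator_mx : 'M['F_2]_(n, n + M) := row_mx 1%:M incidence_mx.

Lemma rank_generator_mx : \rank generator_mx = n.
Proof.
apply/eqP; rewrite eqn_leq rank_leq_row -{1}(mxrank1 'F_2 n).
have <- : generator_mx *m col_mx 1%:M 0 = 1%:M.
  by rewrite mul_row_col mulmx1 mulmx0 addr0.
exact: mxrankM_maxl.
Qed.

Lemma generator_mx_info (x : 'rV_n) i : (x *m generator_mx) 0 (lshift M i) = x 0 i.
Proof. by rewrite mul_mx_row row_mxEl mulmx1. Qed.

Lemma generator_mx_parity (x : 'rV_n) L :
  (x *m generator_mx) 0 (rshift n (line_index L)) = \sum_(i | inc (point_of i) L) x 0 i.
Proof.
rewrite /generator_mx mul_mx_row row_mxEr mxE [RHS]big_mkcond; apply: eq_bigr => i _.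
by rewrite mxE line_indexK; case: inc; rewrite ?mulr1 ?mulr0.
Qed.

Definition line_rest (i : 'I_n) (L : Ln) : {set 'I_n} := [set i' | inc (point_of i') L] :\ i.

Definition recovery_set (i : 'I_n) (L : Ln) : {set 'I_(n + M)} :=
  rshift n (line_index L) |: lshift M @: line_rest i L.

Lemma card_recovery_set i L : inc (point_of i) L -> (#|recovery_set i L| <= r)%N.
Proof.
move=> inc_i; rewrite (leq_trans (leq_card_setU _ _)) // cards1.
rewrite card_imset; last exact: lshift_inj.
have: (#|[set i' | inc (point_of i') L]| <= r)%N.
  apply: leq_trans (card_line L); rewrite -(card_imset _ point_of_inj).
  by apply/subset_leq_card/subsetP => _ /imsetP[i' /[!inE] inc_i' ->].
by rewrite (cardsD1 i) inE inc_i.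
Qed.

Lemma recoverable_recovery_set i L :
  inc (point_of i) L -> recoverable generator_mx i (recovery_set i L).
Proof.
move=> inc_i.
exists (fun w => w (rshift n (line_index L)) - \sum_(i' in line_rest i L) w (lshift M i')) => x.
rewrite /restrict_cw setU11 generator_mx_parity.
rewrite [X in _ - X](eq_bigr (fun i' => x 0 i')) => [|i' rest_i']; last first.
  by rewrite ifT ?generator_mx_info //; apply/setU1P; right; apply: imset_f.
rewrite (bigD1 i) //= (eq_bigl (mem (line_rest i L))) ?addrK // => i'.
by rewrite !inE andbC.
Qed.

Lemma disjoint_recovery_sets i i' L L' : L != L' ->
  [disjoint line_rest i L & line_rest i' L'] ->
  [disjoint recovery_set i L & recovery_set i' L'].
Proof.
move=> ne_L disj; apply/disjointP => _ /setU1P[->|/imsetP[i0 rest_i0 ->]].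
all: apply/negP => /setU1P.
- case=> [/rshift_inj/(can_inj line_indexK) eq_L|/imsetP[? _ /eqP]]; last by rewrite eq_rlshift.
  by rewrite eq_L eqxx in ne_L.
- case=> [/eqP|/imsetP[i1 rest_i1 /lshift_inj eq_i]]; first by rewrite eq_lrshift.
  by move/disjointP: disj => /(_ _ rest_i0); rewrite eq_i rest_i1.
Qed.

Lemma disjoint_compatible i l i' l' : compatible (point_of i) l (point_of i') l' ->
  [disjoint recovery_set i (line (point_of i) l) & recovery_set i' (line (point_of i') l')].
Proof.
rewrite /compatible; case: eqP => [eq_x ne_l|ne_x no_meet]; apply: disjoint_recovery_sets.
- by rewrite eq_x (inj_eq (@line_inj _)).
- apply/disjointP => i0; rewrite !inE => /andP[ne_i0 inc_l]; apply/negP => /andP[_ inc_l'].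
  move/negP: ne_l; apply; apply/eqP; apply: (lines_meet_only_at _ inc_l); last by rewrite eq_x.
  by rewrite (inj_eq point_of_inj) eq_sym.
- by apply: contraNneq no_meet => <-; apply/existsP; exists (point_of i); rewrite inc_line.
- apply/disjointP => i0; rewrite !inE => /andP[_ inc_l]; apply/negP => /andP[_ inc_l'].
  by move/negP: no_meet; apply; apply/existsP; exists (point_of i0); rewrite inc_l inc_l'.
Qed.

Lemma batch_code_generator_mx : batch_code r k generator_mx.
Proof.
move=> idx; have [d compat] := exists_compatible_directions (point_of \o idx).
exists (fun j => recovery_set (idx j) (line (point_of (idx j)) (d j))).
split; [|split] => [j j' ne_j|j|j].
- exact: disjoint_compatible (compat j j' ne_j).
- exact: card_recovery_set.
- exact: recoverable_recovery_set.
Qed.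

End IncidenceCode.

Section AffineGrid.

Variables (F : finFieldType) (k r : nat) (s : 'I_k -> F) (v : 'I_r -> F).
Hypotheses (s_inj : injective s) (v_inj : injective v) (v_tf : triangle_free s v).

(* [(b, c)] is the affine point [(v b, c)] and [(l, g)] the line [y = s l * x + g]. *)
Definition on_line (z : 'I_r * F) (L : 'I_k * F) : bool := z.2 == L.2 + s L.1 * v z.1.

Definition line_through (z : 'I_r * F) (l : 'I_k) : 'I_k * F := (l, z.2 - s l * v z.1).

Lemma on_line_through z l : on_line z (line_through z l).
Proof. by rewrite /on_line subrK. Qed.

Lemma line_through_inj z : injective (line_through z).
Proof. by move=> l l' []. Qed.

Lemma on_lineE z L : on_line z L = (L == line_through z L.1).
Proof.
case: L => l g; rewrite /on_line /line_through /=.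
by apply/eqP/eqP => [->|[->]]; rewrite ?addrK ?subrK.
Qed.

Lemma on_line_same_direction z L L' : on_line z L -> on_line z L' -> L.1 = L'.1 -> L = L'.
Proof. by rewrite !on_lineE => /eqP eq_L /eqP eq_L' eq_l; rewrite eq_L eq_L' eq_l. Qed.

Lemma on_line_same_column z z' L : on_line z L -> on_line z' L -> z.1 = z'.1 -> z = z'.
Proof.
case: z z' => [b c] [b' c']; rewrite /on_line /= => /eqP-> /eqP-> eq_b.
by rewrite eq_b.
Qed.

Lemma card_on_line L : (#|[set z | on_line z L]| <= r)%N.
Proof.
rewrite -(@card_in_imset _ _ fst) => [|z z']; last by rewrite !inE; apply: on_line_same_column.
by rewrite (leq_trans (max_card _)) ?card_ord.
Qed.

Lemma lines_through_meet_only_at x z l l' :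
  x != z -> on_line z (line_through x l) -> on_line z (line_through x l') -> l = l'.
Proof.
move=> ne_xz on_l on_l'; apply: contraNeq ne_xz => ne_l; apply/eqP.
apply: (on_line_same_column (on_line_through x l) on_l).
have: (s l - s l') * (v z.1 - v x.1) = 0.
  move: on_l on_l'; rewrite /on_line /= => /eqP on_l /eqP on_l'.
  transitivity ((x.2 - s l * v x.1 + s l * v z.1) - (x.2 - s l' * v x.1 + s l' * v z.1)).
    by ring.
  by rewrite -on_l -on_l' subrr.
move/eqP; rewrite mulf_eq0 !subr_eq0 (inj_eq s_inj) (negbTE ne_l) /=.
by move=> /eqP/v_inj->.
Qed.

Lemma triangle_form_on_lines x z1 z2 L l1 l2 :
  on_line z1 (line_through x l1) -> on_line z2 (line_through x l2) ->
  on_line z1 L -> on_line z2 L -> triangle_form s (v x.1) (v z2.1) (v z1.1) l1 l2 L.1 = 0.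
Proof.
rewrite /on_line /= => /eqP on1 /eqP on2 /eqP onL1 /eqP onL2.
transitivity ((x.2 - s l2 * v x.1 + s l2 * v z2.1) - (x.2 - s l1 * v x.1 + s l1 * v z1.1)
  - ((L.2 + s L.1 * v z2.1) - (L.2 + s L.1 * v z1.1))).
  by rewrite /triangle_form; ring.
by rewrite -on1 -on2 -onL1 -onL2 subrr.
Qed.

Lemma meeting_direction_unique x L l1 l2 : ~~ on_line x L ->
  meets on_line (line_through x l1) L -> meets on_line (line_through x l2) L -> l1 = l2.
Proof.
move=> off_x /existsP[z1 /andP[on1 onL1]] /existsP[z2 /andP[on2 onL2]].
case: (eqVneq l1 l2) => // ne_l; exfalso.
have ne_x z : on_line z L -> x != z by move=> onL_z; apply: contraNneq off_x => ->.
have ne_z : z1 != z2.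
  apply: contraNneq ne_l => eq_z; apply/eqP.
  by apply: (lines_through_meet_only_at (ne_x _ onL1) on1); rewrite eq_z.
have ne_dir z l : on_line z (line_through x l) -> on_line z L -> L.1 != l.
  move=> on_z onL_z; apply: contraNneq off_x => eq_l.
  by rewrite (on_line_same_direction onL_z on_z eq_l) on_line_through.
have ne_col z z' L' : on_line z L' -> on_line z' L' -> z != z' -> z.1 != z'.1.
  by move=> on_z on_z'; apply: contra => /eqP/(on_line_same_column on_z on_z')->.
suff: triangle_form s (v x.1) (v z2.1) (v z1.1) l1 l2 L.1 != 0.
  by rewrite (triangle_form_on_lines on1 on2 onL1 onL2) eqxx.
apply: v_tf; rewrite /= !inE !negb_or.
- rewrite (ne_col _ _ _ (on_line_through x l2) on2 (ne_x _ onL2)).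
  rewrite (ne_col _ _ _ (on_line_through x l1) on1 (ne_x _ onL1)).
  by rewrite (ne_col _ _ _ onL2 onL1) // eq_sym.
- by rewrite ne_l !(eq_sym _ L.1) (ne_dir _ _ on1 onL1) (ne_dir _ _ on2 onL2).
Qed.

Variables (n M : nat) (card_P : #|{: 'I_r * F}| = n) (card_Ln : #|{: 'I_k * F}| = M).

Lemma batch_code_affine_grid : batch_code r k (generator_mx on_line card_P card_Ln).
Proof.
apply: (batch_code_generator_mx (line := line_through)).
- exact: on_line_through.
- exact: line_through_inj.
- exact: lines_through_meet_only_at.
- exact: meeting_direction_unique.
- exact: card_on_line.
Qed.

End AffineGrid.

Lemma natr_Fp_inj p k : prime p -> (k < p)%N ->
  injective (fun l : 'I_k => (l : nat)%:R : 'F_p).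
Proof.
move=> p_pr lt_kp l l' /(congr1 (fun a : 'F_p => a : nat)) /=.
by rewrite !val_Fp_nat // !modn_small ?(ltn_trans (ltn_ord _) lt_kp) // => /val_inj.
Qed.

Lemma exists_injective_triangle_free_Fp p k r : prime p -> (0 < k)%N -> (k < p)%N ->
    (2 * k ^ 2 * r ^ 2 < p)%N ->
  exists v : 'I_r -> 'F_p, injective v /\ triangle_free (fun l : 'I_k => (l : nat)%:R : 'F_p) v.
Proof.
move=> p_pr k_gt0 lt_kp p_big; apply: exists_injective_triangle_free; first exact: natr_Fp_inj.
rewrite [X in (_ <= X)%N](card_Fp p_pr); apply: leq_trans (ltnW p_big).
rewrite (leq_trans _ (_ : r + r ^ 2 * (k.-1 * (2 * k).-1) <= 2 * k ^ 2 * r ^ 2)%N) //.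
  by rewrite leq_add2l leq_mul2l card_slope_ratios_Fp ?orbT.
by case: k k_gt0 {lt_kp p_big} => // k _; rewrite mul2n doubleS /= -mul2n; nia.
Qed.

Theorem theorem11 (r k p : nat) :
  (0 < r)%N -> (0 < k)%N ->
  prime p -> (2 * k ^ 2 * r ^ 2 < p)%N ->
  (forall q : nat, prime q -> (2 * k ^ 2 * r ^ 2 < q)%N -> (p <= q)%N) ->
  exists (N : nat) (G : 'M['F_2]_(r * p, N)),
    batch_code r k G /\ \rank G = (r * p)%N /\
    ((r * p)%:R / N%:R : rat) = r%:R / (r + k)%:R /\
    (N - r * p = k * p)%N.
Proof.
move=> r_gt0 k_gt0 p_pr p_big _.
have lt_kp : (k < p)%N by apply: leq_ltn_trans p_big; nia.
have [v [v_inj v_tf]] := exists_injective_triangle_free_Fp p_pr k_gt0 lt_kp p_big.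
have card_P : #|{: 'I_r * 'F_p}| = (r * p)%N by rewrite card_prod card_ord card_Fp.
have card_Ln : #|{: 'I_k * 'F_p}| = (k * p)%N by rewrite card_prod card_ord card_Fp.
pose s (l : 'I_k) : 'F_p := (l : nat)%:R.
exists (r * p + k * p)%N, (generator_mx (on_line s v) card_P card_Ln).
split; [|split; [|split]].
- exact: (batch_code_affine_grid (natr_Fp_inj p_pr lt_kp) v_inj v_tf card_P card_Ln).
- exact: rank_generator_mx.
- rewrite -mulnDl !natrM invfM mulrACA divff ?mulr1 //.
  by rewrite Num.Theory.pnatr_eq0 -lt0n prime_gt0.
- by rewrite addKn.
Qed.
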